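(* Let $S$ be an isolated invariant set for $f$. Suppose $P'=(N,L')$ and $P=(N\cup L,L)$ are filtration pairs for $S$ with $L'\subset L$ and $f(L)\subset\operatorname{Int}L$. Then the pointed space maps $f_{P'}$ and $f_P$ are shift equivalent.
   Context: Let $X$ be a locally compact metric space, $U\subset X$ open and $f:U\to X$ continuous. A solution through $x$ is a map $\sigma:\mathbb Z\to U$ with $\sigma(0)=x$ and $f(\sigma(n))=\sigma(n+1)$ for all $n$; for $N\subset U$, $\operatorname{Inv}N$ is the set of $x\in N$ admitting a solution through $x$ with values in $N$. A compact $N\subset U$ is an isolating neighborhood if $\operatorname{Inv}N\subset\operatorname{Int}N$; $S$ is an isolated invariant set if $S=\operatorname{Inv}N$ for some isolating neighborhood $N$. The exit set is $N^-=\{x\in N:f(x)\notin\operatorname{Int}N\}$. A filtration pair for $S$ is a pair of compact sets $L\subset N$ in the interior of the domain of $f$, each the closure of its interior, with (1) $\operatorname{cl}(N\setminus L)$ an isolating neighborhood and $\operatorname{Inv}\operatorname{cl}(N\setminus L)=S$; (2) $L$ a neighborhood of $N^-$ in $N$; (3) $f(L)\cap\operatorname{cl}(N\setminus L)=\emptyset$. For a filtration pair $P=(N,L)$, $N_L=N/L$ with $L$ collapsed to the base point $[L]$ (if $L=\emptyset$, a disjoint point $[L]$ is adjoined), $p:N\to N_L$ the quotient map, and the pointed space map $f_P:N_L\to N_L$ is $f_P([L])=[L]$, $f_P(p(x))=p(f(x))$ for $x\in N\setminus L$. Base-point preserving maps $F:Y\to Y$, $G:Y'\to Y'$ are shift equivalent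 if there exist $m\in\mathbb Z^+$ and continuous base-point preserving $r:Y\to Y'$, $s:Y'\to Y$ with $r\circ F=G\circ r$, $s\circ G=F\circ s$, $s\circ r=F^m$, $r\circ s=G^m$. *)

From HB Require Import structures.
From mathcomp Require Import all_boot all_order all_algebra.
From mathcomp Require Import all_classical all_reals topology normedtype.
Set Implicit Arguments. Unset Strict Implicit. Unset Printing Implicit Defensive.
Import Order.TTheory GRing.Theory Num.Theory.
Local Open Scope classical_set_scope.
Local Open Scope ring_scope.

Section Conley.
Context {X : topologicalType}.
Variables (U : set X) (f : X -> X).

Definition solution_in (N : set X) (x : X) :=
  exists sigma : int -> X, sigma 0 = x /\ (forall n, U (sigma n)) /\
    (forall n, f (sigma n) = sigma (n + 1)) /\ (forall n, N (sigma n)).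

Definition Inv (N : set X) : set X := [set x | N x /\ solution_in N x].

Definition isolating_nbhd (N : set X) :=
  compact N /\ N `<=` U /\ Inv N `<=` interior N.

Definition isolated_invariant (S : set X) :=
  exists N, isolating_nbhd N /\ S = Inv N.

Definition exit_set (N : set X) : set X := [set x | N x /\ ~ interior N (f x)].

Definition ropen (N A : set X) := exists O, open O /\ A = O `&` N.

Definition rnbhd (N L A : set X) :=
  exists O, open O /\ A `<=` O /\ O `&` N `<=` L.

Definition filtration_pair (S N L : set X) :=
  [/\ compact N /\ compact L, L `<=` N /\ N `<=` interior U,
   closure (interior N) = N /\ closure (interior L) = L /\
   (isolating_nbhd (closure (N `\` L)) /\ Inv (closure (N `\` L)) = S),
   rnbhd N L (exit_set N) &
   f @` L `&` closure (N `\` L) = set0].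

(* Pointed quotient space N_L, realised inside option X:
   None is the base point [L]; Some x stands for the class of x in N \ L. *)
Definition qproj (L : set X) (x : X) : option X :=
  if asbool (L x) then None else Some x.

Definition qcarrier (N L : set X) : set (option X) :=
  [set None] `|` (Some @` (N `\` L)).

(* quotient topology on N_L (base point isolated if L is empty) *)
Definition qopen (N L : set X) (V : set (option X)) :=
  V `<=` qcarrier N L /\ ropen N (N `&` (qproj L @^-1` V)).

Definition fP (L : set X) (y : option X) : option X :=
  match y with None => None | Some x => qproj L (f x) end.

End Conley.

Definition pcont {T : Type} (Q Q' : set (option T))
  (O O' : set (option T) -> Prop) (r : option T -> option T) :=
  [/\ r None = None, (forall y, Q y -> Q' (r y)) &
      forall V, O' V -> O (Q `&` (r @^-1` V))].

Definition shift_equivalent {T : Type} (Q Q' : set (option T))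
  (O O' : set (option T) -> Prop) (F G : option T -> option T) :=
  exists (m : nat) (r s : option T -> option T),
    [/\ (0 < m)%N, pcont Q Q' O O' r /\ pcont Q' Q O' O s,
        (forall y, Q y -> r (F y) = G (r y)) /\
        (forall y, Q' y -> s (G y) = F (s y)),
        (forall y, Q y -> s (r y) = iter m F y) &
        (forall y, Q' y -> r (s y) = iter m G y)].

From Pilot Require Import Defs.
From HB Require Import structures.
From mathcomp Require Import all_boot all_order all_algebra.
From mathcomp Require Import all_classical all_reals topology normedtype.
From mathcomp Require Import zify.
Set Implicit Arguments. Unset Strict Implicit. Unset Printing Implicit Defensive.
Local Open Scope classical_set_scope.

(* The comparison maps are r : N/L' -> (N u L)/L, induced by the identity
   (it collapses L), and s := F^m : (N u L)/L -> N/L', where F = f_P'.  All four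
   shift-equivalence identities reduce to one fact: for some m, F^m sends every
   point of N n L to the base point.  Otherwise the compact set
   L n cl(N \ L') carries orbit segments of every length, and a limiting
   argument turns them into a full solution inside it; such a solution lies in
   Inv cl(N \ L') = S, yet also in f(L), which misses S by condition (3) for P.
   Continuity of s is checked separately on the closed pieces N and L: on L it
   is constantly the base point. *)

Section RelativelyOpen.
Context {T : topologicalType}.
Implicit Types N L A B : set T.

Lemma ropen_local N A : A `<=` N ->
  (forall x, A x -> exists B, [/\ open B, B x & B `&` N `<=` A]) -> ropen N A.
Proof.
move=> AN Aloc.
exists (\bigcup_(B in [set B | open B /\ B `&` N `<=` A]) B); split.
  by apply: bigcup_open => B [].
apply/seteqP; split=> [x Ax|x [[B [_ BA] Bx] Nx]]; last exact: BA.
by have [B [oB Bx BA]] := Aloc x Ax; split; [exists B|exact: AN].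
Qed.

Lemma ropen_preimage {U : topologicalType} N (f : T -> U) (W : set U) :
  (forall x, N x -> {for x, continuous f}) -> open W ->
  ropen N (N `&` f @^-1` W).
Proof.
move=> fc oW; apply: ropen_local => [x []//|x [Nx Wfx]].
have /(fc x Nx) : nbhs (f x) W by exact: open_nbhs_nbhs.
by rewrite nbhsE => -[B [oB Bx] BW]; exists B; split=> // y [/BW].
Qed.

Lemma ropen_eq_in N A B : (forall x, N x -> A x <-> B x) ->
  ropen N (N `&` B) -> ropen N (N `&` A).
Proof.
move=> AB; suff -> : N `&` A = N `&` B by [].
by apply/seteqP; split=> x [Nx /(AB x Nx)].
Qed.

Lemma ropen_sub N M A : N `<=` M -> ropen M (M `&` A) -> ropen N (N `&` A).
Proof.
move=> NM [O [oO EO]]; exists O; split=> //.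
apply/seteqP; split=> [x [Nx Ax]|x [Ox Nx]]; split=> //.
  by have [] : (O `&` M) x by rewrite -EO; split=> //; exact: NM.
by have [] : (M `&` A) x by rewrite EO; split=> //; exact: NM.
Qed.

Lemma ropen_cst N (P : Prop) : ropen N (N `&` [set _ | P]).
Proof.
exists [set _ | P]; split; last exact: setIC.
have [p|np] := pselect P.
  by rewrite (_ : [set _ | P] = setT); [exact: openT|apply/seteqP; split].
by rewrite (_ : [set _ | P] = set0); [exact: open0|apply/seteqP; split].
Qed.

Lemma ropenIl O N A : open O -> ropen N A -> ropen N (O `&` A).
Proof.
move=> oO [O' [oO' ->]]; exists (O `&` O'); split; first exact: openI.
by rewrite setIA.
Qed.

Lemma ropen_setU N L A : closed N -> closed L ->
  ropen N (N `&` A) -> ropen L (L `&` A) -> ropen (N `|` L) ((N `|` L) `&` A).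
Proof.
move=> cN cL [O1 [oO1 E1]] [O2 [oO2 E2]].
have NO1 x : N x -> A x <-> O1 x.
  move=> Nx; split=> [Ax|O1x]; first by have [] : (O1 `&` N) x by rewrite -E1.
  by have [] : (N `&` A) x by rewrite E1.
have LO2 x : L x -> A x <-> O2 x.
  move=> Lx; split=> [Ax|O2x]; first by have [] : (O2 `&` L) x by rewrite -E2.
  by have [] : (L `&` A) x by rewrite E2.
exists ((O1 `|` ~` N) `&` (O2 `|` ~` L)); split.
  by apply: openI; apply: openU => //; exact: closed_openC.
apply/seteqP; split=> [x [NLx Ax]|x [[O1x O2x] NLx]].
- split=> //; split.
  + by have [Nx|] := pselect (N x); [left; apply/(NO1 _ Nx)|right].
  + by have [Lx|] := pselect (L x); [left; apply/(LO2 _ Lx)|right].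
- split=> //; case: NLx => [Nx|Lx].
  + by apply/(NO1 _ Nx); case: O1x.
  + by apply/(LO2 _ Lx); case: O2x.
Qed.

Lemma closedI_preimage {U : topologicalType} A (C : set U) (f : T -> U) :
  closed A -> closed C -> (forall x, A x -> {for x, continuous f}) ->
  closed (A `&` f @^-1` C).
Proof.
move=> cA cC fc x clx.
have Ax : A x by apply: cA => W /clx [y [[Ay _] Wy]]; exists y.
split=> //; apply: cC => W /(fc x Ax) /clx [y [[_ Cy] Wy]].
by exists (f y).
Qed.

End RelativelyOpen.

Section CompactSolution.
Context {T : topologicalType} (f : T -> T) (K : set T).
Hypotheses (hT : hausdorff_space T) (cK : compact K)
  (fK : forall x, K x -> {for x, continuous f}).

Definition seg n := [set z | forall j, (j <= n)%N -> K (iter j f z)].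

Lemma seg0 : seg 0 = K.
Proof. by apply/seteqP; split=> [z /(_ 0%N)|z Kz [|]] //; apply. Qed.

Lemma segS n z : seg n.+1 z <-> K z /\ seg n (f z).
Proof.
split=> [Sz|[Kz Sfz] [//|j] jn].
  by split=> [|j jn]; [exact: Sz 0%N _|rewrite -iterSr; exact: Sz j.+1 _].
by rewrite iterSr; exact: Sfz.
Qed.

Lemma seg_le m n : (m <= n)%N -> seg n `<=` seg m.
Proof. by move=> mn z Sz j jm; apply: Sz; exact: leq_trans jm mn. Qed.

Lemma seg_continuous n z : seg n z -> {for z, continuous (iter n f)}.
Proof.
elim: n z => [|n IH] z; first by move=> _; exact: cvg_id.
move=> /segS [Kz Sfz]; have -> : iter n.+1 f = iter n f \o f.
  by apply: funext => x; rewrite iterSr.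
by apply: continuous_comp; [exact: fK|exact: IH].
Qed.

Lemma closed_seg n : closed (seg n).
Proof.
elim: n => [|n IH]; first by rewrite seg0; exact: compact_closed.
have -> : seg n.+1 = K `&` f @^-1` seg n by apply/seteqP; split=> z /segS.
exact: closedI_preimage (compact_closed hT cK) IH fK.
Qed.

Lemma compact_seg n : compact (seg n).
Proof. by apply: (subclosed_compact (@closed_seg n) cK) => z /(_ 0%N); apply. Qed.

(* centred n: the points having n steps of past and n steps of future in K *)
Definition centred n := iter n f @` seg (n + n).

Lemma closed_centred n : closed (centred n).
Proof.
apply: compact_closed => //; apply: continuous_compact; last exact: compact_seg.
apply: continuous_in_subspaceT => z /[!inE] Sz.
by apply: seg_continuous; apply: seg_le Sz; exact: leq_addr.
Qed.

Lemma centred_K n z j : centred n z -> (j <= n)%N -> K (iter j f z).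
Proof. by move=> [w Sw <-] jn; rewrite -iterD; apply: Sw; rewrite leq_add2r. Qed.

Lemma centred_le k n : (k <= n)%N -> centred n `<=` centred k.
Proof.
move=> /subnK <-; elim: (n - k)%N => [//|d IH] _ [w Sw <-]; apply: IH.
have /segS [_ Sfw] : seg (d + k + (d + k)).+1 w by apply: seg_le Sw; lia.
by exists (f w); rewrite // -iterSr addSn.
Qed.

Definition core := [set z | forall n, centred n z].

Lemma core_K z : core z -> K z.
Proof. by move=> Cz; exact: (centred_K (Cz 0%N) (leqnn 0)). Qed.

Lemma cluster_core (u : nat -> T) : (forall n, centred n (u n)) ->
  exists p, core p /\ cluster (u @ \oo) p.
Proof.
move=> Cu; have [|p [_ clp]] := cK (F := u @ \oo) _.
  by exists 0%N => // n _; exact: (centred_K (Cu n) (leq0n n)).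
exists p; split=> // k; apply: (@closed_centred k).
rewrite clusterE in clp; apply: clp; exists k => // n /= kn.
exact: centred_le kn _ (Cu n).
Qed.

Lemma core_preimage z : core z -> exists2 u, core u & f u = z.
Proof.
move=> Cz; have /choice [w Hw] : forall n, exists w,
    seg (n.+1 + n.+1) w /\ iter n.+1 f w = z.
  by move=> n; have [w Sw <-] := Cz n.+1; exists w.
pose u n := iter n f (w n).
have [|p [Cp clp]] := @cluster_core u.
  by move=> n; exists (w n) => //; apply: seg_le (proj1 (Hw n)); lia.
exists p => //; apply: hT => A B /(fK (core_K Cp)) fA /nbhs_singleton Bz.
have uu : (u @ \oo) (range u) by exists 0%N => // n _; exists n.
have [_ [[n _ <-] Afu]] := clp _ _ uu fA.
by exists z; split=> //; rewrite -(proj2 (Hw n)) iterS.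
Qed.

Lemma compact_solution : (forall n, seg n !=set0) ->
  exists sigma : int -> T,
    (forall n, K (sigma n)) /\ (forall n, f (sigma n) = sigma (n + 1)%R).
Proof.
move=> Sne; have /choice [z Sz] := fun n => Sne (n + n)%N.
have [|p [Cp _]] := @cluster_core (fun n => iter n f (z n)).
  by move=> n; exists (z n).
have /choice [g Hg] : forall z, exists u, core z -> core u /\ f u = z.
  move=> y; have [Cy|] := pselect (core y); last by exists y.
  by have [u Cu fu] := core_preimage Cy; exists u.
have Cg k : core (iter k g p) by elim: k => [//|k IH]; exact: (Hg _ IH).1.
exists (fun n => match n with Posz k => iter k f p | Negz k => iter k.+1 g p end).
split=> [[k|k]|[k|[|k]]].
- exact: centred_K (Cp k) _.
- exact: core_K.
- by have -> : (Posz k + 1 = Posz k.+1)%R by lia.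
- by rewrite /= (Hg _ Cp).2.
- have -> : (Negz k.+1 + 1 = Negz k)%R by rewrite !NegzE; lia.
  by rewrite iterS (Hg _ (Cg k.+1)).2.
Qed.

End CompactSolution.

Section PointedQuotient.
Context {T : topologicalType}.
Implicit Types N L : set T.

Lemma qprojT L x : L x -> qproj L x = None.
Proof. by move=> Lx; rewrite /qproj asboolT. Qed.

Lemma qprojF L x : ~ L x -> qproj L x = Some x.
Proof. by move=> Lx; rewrite /qproj asboolF. Qed.

Lemma iter_fP_None (f : T -> T) L n : iter n (fP f L) None = None.
Proof. by elim: n => //= n ->. Qed.

Lemma qproj_qcarrier N L x : N x -> qcarrier N L (qproj L x).
Proof.
move=> Nx; have [Lx|Lx] := pselect (L x); first by rewrite qprojT //; left.
by rewrite qprojF //; right; exists x.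
Qed.

Lemma qopen_sub N L V : qopen N L V -> V `<=` qcarrier N L.
Proof. by case. Qed.

Lemma qproj_preimage_qcarrier N L h (V : set (option T)) :
  N `&` qproj L @^-1` (qcarrier N L `&` h @^-1` V) = N `&` (h \o qproj L) @^-1` V.
Proof.
apply/seteqP; split=> x [Nx] => [[]|] //.
by split=> //; split=> //; exact: qproj_qcarrier.
Qed.

Lemma pcont_qopen N1 L1 N2 L2 (h : option T -> option T) :
  h None = None -> (forall y, qcarrier N1 L1 y -> qcarrier N2 L2 (h y)) ->
  (forall V, qopen N2 L2 V -> ropen N1 (N1 `&` (h \o qproj L1) @^-1` V)) ->
  pcont (qcarrier N1 L1) (qcarrier N2 L2) (qopen N1 L1) (qopen N2 L2) h.
Proof.
move=> h0 hQ hV; split=> // V /hV; rewrite -qproj_preimage_qcarrier.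
by split=> // y [].
Qed.

Lemma qopen_ropen N L (V : set (option T)) h :
  qopen N L (qcarrier N L `&` h @^-1` V) -> ropen N (N `&` (h \o qproj L) @^-1` V).
Proof. by case=> _; rewrite qproj_preimage_qcarrier. Qed.

End PointedQuotient.

Lemma pcont_comp {T : Type} (Q1 Q2 Q3 : set (option T)) O1 O2 O3 h g :
  pcont Q1 Q2 O1 O2 h -> pcont Q2 Q3 O2 O3 g -> pcont Q1 Q3 O1 O3 (g \o h).
Proof.
move=> [h0 hQ hO] [g0 gQ gO]; split=> [|y /hQ /gQ //|V /gO /hO].
  by rewrite /= h0 g0.
suff -> : Q1 `&` (g \o h) @^-1` V = Q1 `&` h @^-1` (Q2 `&` g @^-1` V) by [].
by apply/seteqP; split=> y [Q1y] => [Vy|[]//]; split=> //; split=> //; exact: hQ.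
Qed.

Lemma pcont_iter {T : Type} (Q : set (option T)) O F :
  (forall V, O V -> V `<=` Q) -> pcont Q Q O O F -> forall m, pcont Q Q O O (iter m F).
Proof.
move=> OQ Fc; elim=> [|m IH]; last exact: pcont_comp IH Fc.
split=> // V OV; suff -> : Q `&` id @^-1` V = V by [].
by apply/seteqP; split=> [y []//|y Vy]; split=> //; exact: OQ Vy.
Qed.

Lemma rnbhd_exit_set {T : topologicalType} (f : T -> T) (N L : set T) x :
  rnbhd N L (exit_set f N) -> N x -> ~ L x -> N (f x).
Proof.
move=> [O [_ [EO OL]]] Nx Lx; apply: (@interior_subset _ N); apply: contrapT => nI.
by apply: Lx; apply: OL; split=> //; exact: EO.
Qed.

Section ShiftEquivalence.
Context {T : topologicalType} (U : set T) (f : T -> T) (N L L' : set T).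
Hypotheses (hT : hausdorff_space T) (fN : forall x, N x -> {for x, continuous f}).
Hypotheses (cN : closed N) (cL : compact L) (cL' : closed L').
Hypotheses (NU : N `<=` U) (L'L : L' `<=` L).
Hypothesis exitN : forall x, N x -> ~ L' x -> N (f x).
Hypothesis fL'_cl : f @` L' `&` closure (N `\` L') = set0.
Hypothesis fL : forall x, L x -> L (f x).
Hypothesis fL_cl : f @` L `&` closure ((N `|` L) `\` L) = set0.
Hypothesis hInv :
  Defs.Inv U f (closure (N `\` L')) = Defs.Inv U f (closure ((N `|` L) `\` L)).

Let F := fP f L'.
Let G := fP f L.
Let r := fP id L.
Let Q := qcarrier N L'.
Let Q' := qcarrier (N `|` L) L.

Lemma fP_qcarrier y : Q y -> Q (F y).
Proof.
by case=> [->|[x [Nx L'x] <-]]; [left|exact: qproj_qcarrier (exitN Nx L'x)].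
Qed.

Lemma pcont_fP : pcont Q Q (qopen N L') (qopen N L') F.
Proof.
apply: pcont_qopen => [//|y|V [_ [O [oO EO]]]]; first exact: fP_qcarrier.
have VO x : N x -> V (qproj L' x) <-> O x.
  move=> Nx; split=> [Vx|Ox]; first by have [] : (O `&` N) x by rewrite -EO.
  by have [] : (N `&` qproj L' @^-1` V) x by rewrite EO.
have fL'x x : L' x -> ~ closure (N `\` L') (f x).
  by move=> L'x clfx; have /[!fL'_cl] : (f @` L' `&` closure (N `\` L')) (f x).
have [V0|nV0] := pselect (V None).
- (* F collapses L', and f maps L' off cl(N \ L') *)
  apply: (ropen_eq_in (B := f @^-1` (O `|` ~` closure (N `\` L')))).
    move=> x Nx /=; have [L'x|L'x] := pselect (L' x).
      by rewrite qprojT //; split=> // _; right; exact: fL'x.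
    rewrite qprojF //= -(VO _ (exitN Nx L'x)); split=> [|[//|ncl]]; first by left.
    have [L'fx|L'fx] := pselect (L' (f x)); first by rewrite qprojT.
    by case: ncl; apply: subset_closure; split=> //; exact: exitN.
  apply: ropen_preimage => //; apply: openU => //.
  exact/closed_openC/closed_closure.
- apply: (ropen_eq_in (B := ~` L' `&` f @^-1` O)).
    move=> x Nx /=; have [L'x|L'x] := pselect (L' x).
      by rewrite qprojT //=; split=> [/nV0|[]].
    by rewrite qprojF //= VO //; [split=> // -[]|exact: exitN].
  by rewrite setICA; apply: ropenIl; [exact: closed_openC|exact: ropen_preimage].
Qed.

Lemma r_qproj x : r (qproj L' x) = qproj L x.
Proof.
have [L'x|L'x] := pselect (L' x); last by rewrite qprojF.
by rewrite !qprojT //; exact: L'L.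
Qed.

Lemma pcont_r : pcont Q Q' (qopen N L') (qopen (N `|` L) L) r.
Proof.
apply: pcont_qopen => [//|y|V [_ VL]].
  by case=> [->|[x [Nx _] <-]]; [left|apply: qproj_qcarrier; left].
apply: (ropen_eq_in (B := qproj L @^-1` V)) => [x _|]; first by rewrite /= r_qproj.
by apply: ropen_sub VL => x; left.
Qed.

Lemma iter_L j x : L x -> L (iter j f x).
Proof. by move=> Lx; elim: j => //= j; exact: fL. Qed.

Lemma r_fP y : Q y -> r (F y) = G (r y).
Proof.
case=> [->|[x [Nx L'x] <-]] //; rewrite [r _]r_qproj.
change (qproj L (f x) = G (qproj L x)).
have [Lx|Lx] := pselect (L x); last by rewrite [qproj L x]qprojF.
by rewrite !qprojT //; exact: fL.
Qed.

Lemma iter_r_fP k y : Q y -> r (iter k F y) = iter k G (r y).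
Proof.
move=> Qy; elim: k => //= k <-; apply: r_fP.
by elim: k => //= k; exact: fP_qcarrier.
Qed.

Lemma iter_fP_neq_None n z : N z -> ~ L' z -> iter n F (Some z) <> None ->
  forall j, (j <= n)%N -> (N `\` L') (iter j f z).
Proof.
elim: n z => [|n IH] z Nz L'z Fn [|j] jn //.
rewrite iterSr /F /= -/F in Fn.
have L'fz : ~ L' (f z) by move=> L'fz; apply: Fn; rewrite qprojT // iter_fP_None.
by rewrite iterSr; apply: IH => //; [exact: exitN|rewrite -(qprojF L'fz)].
Qed.

Lemma uniform_exit : exists2 m, (0 < m)%N &
  forall x, N x -> L x -> iter m F (qproj L' x) = None.
Proof.
pose K := L `&` closure (N `\` L').
have KN : K `<=` N.
  by move=> x [_ clx]; apply: cN; apply: closureS clx => y [].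
have cK : compact K by apply: compact_closedI; last exact: closed_closure.
suff [m exit_m] : exists m,
    forall x, N x -> L x -> ~ L' x -> iter m F (Some x) = None.
  exists m.+1 => // x Nx Lx; have [L'x|L'x] := pselect (L' x).
    by rewrite qprojT // iter_fP_None.
  by rewrite qprojF // iterS exit_m.
apply: contrapT => noexit.
have [|sigma [Ks fs]] := @compact_solution _ f K hT cK (fun x Kx => fN (KN x Kx)).
  move=> n; apply: contrapT => Sn; apply: noexit; exists n => x Nx Lx L'x.
  apply: contrapT => Fn; apply: Sn; exists x => j jn.
  have NLj := iter_fP_neq_None Nx L'x Fn jn.
  by split; [exact: iter_L|exact: subset_closure].
have : Defs.Inv U f (closure (N `\` L')) (sigma 0).
  split; first by case: (Ks 0).
  exists sigma; split=> //; split=> [n|]; first exact: NU (KN _ (Ks n)).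
  by split=> // n; case: (Ks n).
rewrite hInv => -[cls0 _].
have /[!fL_cl] // : (f @` L `&` closure ((N `|` L) `\` L)) (sigma 0).
by split=> //; exists (sigma (-1)%R); [case: (Ks (-1)%R)|rewrite fs].
Qed.

Section UniformExit.
Variable m : nat.
Hypothesis exit_m : forall x, N x -> L x -> iter m F (qproj L' x) = None.
Let s := iter m F.

Lemma s_qproj x : N x -> s (qproj L x) = s (qproj L' x).
Proof.
move=> Nx; have [Lx|Lx] := pselect (L x); last by rewrite !qprojF // => /L'L.
by rewrite qprojT // /s iter_fP_None exit_m.
Qed.

Lemma qcarrier_Some x : Q' (Some x) -> N x /\ ~ L x.
Proof. by case=> [//|[y [[Ny|Ly] Ly'] [<-]]]. Qed.

Lemma qcarrier_sub : Q' `<=` Q.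
Proof.
case=> [x /qcarrier_Some [Nx Lx]|]; last by left.
by right; exists x => //; split=> // /L'L.
Qed.

Lemma pcont_s : pcont Q' Q (qopen (N `|` L) L) (qopen N L') s.
Proof.
have [_ sQ sO] := pcont_iter (@qopen_sub _ N L') pcont_fP m.
apply: pcont_qopen => [|y /qcarrier_sub /sQ //|V /sO /qopen_ropen sV].
  exact: iter_fP_None.
apply: ropen_setU => //; first exact: compact_closed.
  apply: (ropen_eq_in (B := (s \o qproj L') @^-1` V)) => // x Nx /=.
  by rewrite s_qproj.
apply: (ropen_eq_in (B := [set _ | V None])) => [x Lx|]; last exact: ropen_cst.
by rewrite /= qprojT // /s iter_fP_None.
Qed.

Lemma shift_equivalent_of_exit : (0 < m)%N ->
  shift_equivalent Q Q' (qopen N L') (qopen (N `|` L) L) F G.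
Proof.
move=> m_gt0; exists m, r, s; split=> //.
- by split; [exact: pcont_r|exact: pcont_s].
- split; first exact: r_fP.
  case=> [x /qcarrier_Some [Nx Lx]|_]; last by rewrite /s /= !iter_fP_None.
  have L'x : ~ L' x by move/L'L.
  by rewrite /s -iterS iterSr /= -/s s_qproj //; exact: exitN.
- move=> y [->|[x [Nx L'x] <-]]; first by rewrite /s iter_fP_None.
  by change (s (qproj L x) = s (Some x)); rewrite s_qproj // qprojF.
- move=> y Q'y; rewrite iter_r_fP; last exact: qcarrier_sub.
  by case: y Q'y => [x /qcarrier_Some [_ Lx]|_] //=; rewrite qprojF.
Qed.

End UniformExit.

Lemma shift_equivalent_fP :
  shift_equivalent Q Q' (qopen N L') (qopen (N `|` L) L) F G.
Proof.
by have [m m_gt0 exit_m] := uniform_exit; exact: (shift_equivalent_of_exit exit_m).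
Qed.

End ShiftEquivalence.

Theorem mainTheorem18 (R : realType) (X : pseudoMetricType R)
  (U : set X) (f : X -> X) (S N L L' : set X) :
  hausdorff_space X -> locally_compact [set: X] ->
  open U -> {within U, continuous f} ->
  isolated_invariant U f S ->
  filtration_pair U f S N L' ->
  filtration_pair U f S (N `|` L) L ->
  L' `<=` L -> f @` L `<=` interior L ->
  shift_equivalent (qcarrier N L') (qcarrier (N `|` L) L)
    (qopen N L') (qopen (N `|` L) L) (fP f L') (fP f L).
Proof.
move=> hT _ oU fc _ [[cN cL'] [_ NU] [_ [_ [_ hS']]] hexit fL'_cl]
  [[_ cL] _ [_ [_ [_ hS]]] _ fL_cl] L'L fL.
have NU' : N `<=` U by move=> x /NU; exact: interior_subset.
have fN x : N x -> {for x, continuous f}.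
  move: fc; rewrite continuous_open_subspace // => fc /NU' Ux.
  by apply: fc; rewrite inE.
apply: (shift_equivalent_fP (U := U) hT fN (compact_closed hT cN) cL
  (compact_closed hT cL')) => //; last by rewrite hS' hS.
- by move=> x Nx; exact: rnbhd_exit_set hexit Nx.
- by move=> x Lx; apply: interior_subset; apply: fL; exists x.
Qed.
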